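(* For all $0<\sigma_1<\sigma_2$, $\mathcal{C}(\sigma_1)\subsetneqq\mathcal{C}(\sigma_2)$.
   Context: $H$ is the closure in $L^2([0,L]^2)^2$ of the $\mathbb{R}^2$-valued $[0,L]^2$-periodic trigonometric polynomials $v$ with $\nabla\cdot v=0$ and $\int v\,dx=0$, with norm $|\cdot|$; $A=-\Delta$ is the Stokes operator with spectrally defined powers $A^{\alpha/2}$. Fix $\nu>0$ and $\kappa_0=2\pi/L$. For $\sigma>0$, $\mathcal{C}(\sigma)$ is the set of $u\in C^\infty([0,L]^2)\cap H$ for which there is $c_0=c_0(u)\in\mathbb{R}$ with $\frac{|A^{\alpha/2}u|^2}{\nu^2\kappa_0^{2\alpha}}\le c_0e^{\sigma\alpha^2}$ for all $\alpha\in\mathbb{N}$. *)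

From Stdlib Require Import Reals Lra Lia ZArith List.
From Coquelicot Require Import Coquelicot.
Open Scope R_scope.

Definition vfield := R -> R -> R * R.

Definition comp (j : bool) (u : vfield) : R -> R -> R :=
  fun x y => if j then snd (u x y) else fst (u x y).

Definition partial (d : bool) (f : R -> R -> R) : R -> R -> R :=
  fun x y => if d then Derive (fun t => f x t) y else Derive (fun t => f t y) x.

Fixpoint iterD (ds : list bool) (f : R -> R -> R) : R -> R -> R :=
  match ds with
  | nil => f
  | d :: ds' => partial d (iterD ds' f)
  end.

Definition smooth2 (f : R -> R -> R) : Prop :=
  forall ds : list bool,
    (forall x y, continuous (fun p : R * R => iterD ds f (fst p) (snd p)) (x, y)) /\
    (forall (d : bool) x y,
        if d then ex_derive (fun t => iterD ds f x t) y
        else ex_derive (fun t => iterD ds f t y) x).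

Definition periodic2 (L : R) (f : R -> R -> R) : Prop :=
  forall x y, f (x + L) y = f x y /\ f x (y + L) = f x y.

Definition int2 (L : R) (g : R -> R -> R) : R :=
  RInt (fun x => RInt (fun y => g x y) 0 L) 0 L.

Definition smooth_in_H (L : R) (u : vfield) : Prop :=
  (forall j, smooth2 (comp j u) /\ periodic2 L (comp j u) /\ int2 L (comp j u) = 0) /\
  (forall x y, partial false (comp false u) x y + partial true (comp true u) x y = 0).

Definition kappa0 (L : R) : R := 2 * PI / L.

Definition phase (L : R) (k1 k2 : Z) (x y : R) : R :=
  kappa0 L * (IZR k1 * x + IZR k2 * y).

(* |(u, e_k)|^2 summed over components, with e_k = exp(i kappa0 k.x)/L the
   orthonormal eigenbasis of A = -Delta on L^2 of the torus *)
Definition four_sq (L : R) (u : vfield) (k1 k2 : Z) : R :=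
  ((int2 L (fun x y => comp false u x y * cos (phase L k1 k2 x y))) ^ 2 +
   (int2 L (fun x y => comp false u x y * sin (phase L k1 k2 x y))) ^ 2 +
   (int2 L (fun x y => comp true u x y * cos (phase L k1 k2 x y))) ^ 2 +
   (int2 L (fun x y => comp true u x y * sin (phase L k1 k2 x y))) ^ 2) / L ^ 2.

Definition eig (L : R) (k1 k2 : Z) : R := kappa0 L ^ 2 * (IZR k1 ^ 2 + IZR k2 ^ 2).

Definition normA_partial (L : R) (u : vfield) (alpha : nat) (N : nat) : R :=
  sum_f_R0 (fun i =>
    sum_f_R0 (fun l =>
      let k1 := (Z.of_nat i - Z.of_nat N)%Z in
      let k2 := (Z.of_nat l - Z.of_nat N)%Z in
      eig L k1 k2 ^ alpha * four_sq L u k1 k2) (2 * N)) (2 * N).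

(* |A^{alpha/2} u|^2 (spectral definition), as an extended real *)
Definition normA2 (L : R) (u : vfield) (alpha : nat) : Rbar :=
  Lim_seq (normA_partial L u alpha).

Definition classC (L nu sigma : R) (u : vfield) : Prop :=
  smooth_in_H L u /\
  exists c0 : R, forall alpha : nat,
    Rbar_le (normA2 L u alpha)
      (Finite (c0 * exp (sigma * INR alpha ^ 2) * (nu ^ 2 * kappa0 L ^ (2 * alpha)))).

(* The inclusion holds because the bound defining C(sigma) grows with sigma.  For strictness,
   take sigma1 < s < sigma2 and the shear flow u = (F(y), 0) with the lacunary series
   F(y) = sum_j exp(-r j^2/2) cos(kappa0 2^j y), r = (ln 2)^2 / s.  Its only Fourier modes are
   (0, +-2^j), and the energy of the mode 2^j in |A^(alpha/2) u|^2 is, up to the factor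
   kappa0^(2 alpha) L^2/4, exp(2 alpha j ln 2 - r j^2): a concave quadratic in j, maximal near
   j = alpha s / ln 2 with value exp(s alpha^2).  The best single mode gives the lower bound
   exp(s alpha^2 - r), which eventually beats any c0 exp(sigma1 alpha^2); completing the square
   bounds the mode 2^j by exp(c + sigma2 alpha^2) / (2^j (2^j + 1)) for a constant c, and these
   weights telescope over the Fourier box. *)

From Pilot Require Import Defs.
From Stdlib Require Import Reals Lra Lia ZArith Classical.
From Coquelicot Require Import Coquelicot.
Open Scope R_scope.

(* Coquelicot states [RInt_ext] goals in the carrier of [R_CompleteNormedModule];
   restating them over [R] lets [ring] and [field] see them. *)
Ltac real_equation := match goal with |- ?a = ?b => change (@eq R a b) end.

Lemma ex_RInt_continuity (f : R -> R) (a b : R) :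
  (forall y, continuity_pt f y) -> ex_RInt f a b.
Proof.
  intros Hf. apply (@ex_RInt_continuous R_CompleteNormedModule).
  intros y _. apply continuity_pt_filterlim, Hf.
Qed.

Lemma RInt_sum_f_R0 (h : nat -> R -> R) (b : R) N :
  (forall j y, continuity_pt (h j) y) ->
  RInt (fun y => sum_f_R0 (fun j => h j y) N) 0 b = sum_f_R0 (fun j => RInt (h j) 0 b) N.
Proof.
  intros Hc. induction N as [| N IH]; simpl; [reflexivity |].
  rewrite (RInt_plus (V := R_CompleteNormedModule) (fun y => sum_f_R0 (fun j => h j y) N)),
    IH; [reflexivity | | apply ex_RInt_continuity, Hc].
  apply ex_RInt_continuity. intros y. now apply continuity_pt_finite_SF.
Qed.

Lemma RInt_lin_comb (f g : R -> R) (a b u v : R) : ex_RInt f u v -> ex_RInt g u v ->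
  RInt (fun y => a * f y + b * g y) u v = a * RInt f u v + b * RInt g u v.
Proof.
  intros Hf Hg.
  rewrite (RInt_plus (V := R_CompleteNormedModule) (fun y => a * f y) (fun y => b * g y)).
  - rewrite (RInt_scal (V := R_CompleteNormedModule) f), (RInt_scal (V := R_CompleteNormedModule) g)
      by assumption.
    reflexivity.
  - now apply (ex_RInt_scal (V := R_CompleteNormedModule) f).
  - now apply (ex_RInt_scal (V := R_CompleteNormedModule) g).
Qed.

Lemma is_lim_seq_eventually_const (u : nat -> R) (l c : R) N0 :
  (forall N, (N0 <= N)%nat -> u N = c) -> is_lim_seq u l -> l = c.
Proof.
  intros Hc Hu.
  assert (Hc' : is_lim_seq (fun _ => c) l).
  { apply (is_lim_seq_ext_loc u); [exists N0; intros N HN; now apply Hc | exact Hu]. }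
  apply is_lim_seq_unique in Hc'. rewrite Lim_seq_const in Hc'. now injection Hc'.
Qed.

Lemma sum_f_R0_vanishing_tail (f : nat -> R) M N : (M <= N)%nat ->
  (forall j, (M < j)%nat -> f j = 0) -> sum_f_R0 f N = sum_f_R0 f M.
Proof.
  intros H Hz. induction H as [| N HMN IH]; [reflexivity |].
  simpl. rewrite IH, Hz by lia. ring.
Qed.

Lemma sum_f_R0_single (f : nat -> R) i0 n : (i0 <= n)%nat ->
  (forall i, i <> i0 -> f i = 0) -> sum_f_R0 f n = f i0.
Proof.
  intros H Hz. induction H as [| n Hn IH]; simpl.
  - destruct i0 as [| i0]; simpl; [reflexivity |].
    rewrite sum_eq_R0 by (intros i Hi; apply Hz; lia). ring.
  - rewrite IH, (Hz (S n)) by lia. ring.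
Qed.

Lemma sum_f_R0_ge_term (f : nat -> R) i0 n : (i0 <= n)%nat ->
  (forall i, 0 <= f i) -> f i0 <= sum_f_R0 f n.
Proof.
  intros H Hf. induction H as [| n Hn IH]; simpl.
  - destruct i0 as [| i0]; simpl; [lra |]. pose proof (cond_pos_sum f i0 Hf). lra.
  - pose proof (Hf (S n)). lra.
Qed.

Lemma sum_f_R0_symmetric_succ (h : Z -> R) N :
  sum_f_R0 (fun l => h (Z.of_nat l - Z.of_nat (S N))%Z) (2 * S N) =
  h (- Z.of_nat (S N))%Z + sum_f_R0 (fun l => h (Z.of_nat l - Z.of_nat N)%Z) (2 * N)
  + h (Z.of_nat (S N)).
Proof.
  replace (2 * S N)%nat with (S (S (2 * N))) by lia.
  rewrite decomp_sum by lia. simpl Init.Nat.pred. rewrite tech5, Rplus_assoc. f_equal.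
  replace (N + (N + 0))%nat with (2 * N)%nat by lia. f_equal.
  - apply sum_eq. intros i _. f_equal. lia.
  - f_equal. lia.
Qed.

Lemma sum_f_R0_symmetric_telescope_le (h : Z -> R) B : 0 <= B -> h 0%Z <= 0 ->
  (forall k, k <> 0%Z -> h k <= B * (1 / IZR (Z.abs k) - 1 / (IZR (Z.abs k) + 1))) ->
  forall N, sum_f_R0 (fun l => h (Z.of_nat l - Z.of_nat N)%Z) (2 * N) <= 2 * B.
Proof.
  intros HB H0 Hh N.
  enough (H : sum_f_R0 (fun l => h (Z.of_nat l - Z.of_nat N)%Z) (2 * N) <=
              2 * B * (1 - 1 / (INR N + 1))).
  { pose proof (pos_INR N).
    assert (0 <= 1 / (INR N + 1)) by (apply Rlt_le, Rdiv_lt_0_compat; lra). nra. }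
  induction N as [| N IH].
  - simpl. replace (1 - 1 / (0 + 1)) with 0 by field. lra.
  - rewrite sum_f_R0_symmetric_succ.
    assert (Habs : forall k, Z.abs k = Z.of_nat (S N) -> IZR (Z.abs k) = INR (S N))
      by (intros k ->; symmetry; apply INR_IZR_INZ).
    pose proof (Hh (Z.of_nat (S N)) ltac:(lia)) as Hp.
    pose proof (Hh (- Z.of_nat (S N))%Z ltac:(lia)) as Hm.
    rewrite Habs in Hp, Hm by lia.
    assert (E : 2 * B * (1 - 1 / (INR (S N) + 1)) =
      2 * B * (1 - 1 / (INR N + 1)) + 2 * (B * (1 / INR (S N) - 1 / (INR (S N) + 1)))).
    { rewrite S_INR. pose proof (pos_INR N). field. lra. }
    lra.
Qed.

Lemma exp_pow x n : exp x ^ n = exp (INR n * x).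
Proof.
  induction n as [| n IH]; simpl pow.
  - now rewrite Rmult_0_l, exp_0.
  - rewrite IH, <- exp_plus, S_INR. f_equal. ring.
Qed.

Lemma exp_le_compat a b : a <= b -> exp a <= exp b.
Proof. intros [H | ->]; [now apply Rlt_le, exp_increasing | apply Rle_refl]. Qed.

Lemma ln2_pos : 0 < ln 2.
Proof. pose proof ln_lt_2. lra. Qed.

Lemma quadratic_exponent_le (a J l s sigma : R) : 0 < s -> s < sigma ->
  2 * (a + 1) * J * l - l ^ 2 / s * J ^ 2 <= s + s ^ 2 / (sigma - s) + sigma * a ^ 2.
Proof.
  intros Hs Hsig.
  (* complete the square twice, in [l J] and then in [a] *)
  assert (H1 : 0 <= (s * (a + 1) - l * J) ^ 2 / s)
    by (apply Rdiv_le_0_compat; [apply pow2_ge_0 | lra]).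
  assert (H2 : 0 <= ((sigma - s) * a - s) ^ 2 / (sigma - s))
    by (apply Rdiv_le_0_compat; [apply pow2_ge_0 | lra]).
  replace ((s * (a + 1) - l * J) ^ 2 / s) with
    (s * (a + 1) ^ 2 - (2 * (a + 1) * J * l - l ^ 2 / s * J ^ 2)) in H1 by (field; lra).
  replace (((sigma - s) * a - s) ^ 2 / (sigma - s)) with
    (s + s ^ 2 / (sigma - s) + sigma * a ^ 2 - s * (a + 1) ^ 2) in H2 by (field; lra).
  lra.
Qed.

Lemma exp_quadratic_dominates sigma s C A : sigma < s -> 0 < A ->
  exists n : nat, C * exp (sigma * INR n ^ 2) < A * exp (s * INR n ^ 2).
Proof.
  intros Hs HA. set (D := Rabs C + 1).
  assert (HD : 0 < D) by (unfold D; pose proof (Rabs_pos C); lra).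
  set (X := (ln D - ln A) / (s - sigma)).
  destruct (INR_unbounded (Rmax 1 X)) as [n Hn]. exists n.
  pose proof (Rmax_l 1 X). pose proof (Rmax_r 1 X).
  assert (HX : ln D - ln A < (s - sigma) * INR n).
  { replace (ln D - ln A) with ((s - sigma) * X) by (unfold X; field; lra).
    apply Rmult_lt_compat_l; lra. }
  assert (Hlt : D * exp (sigma * INR n ^ 2) < A * exp (s * INR n ^ 2)).
  { rewrite <- (exp_ln D), <- (exp_ln A), <- !exp_plus by assumption.
    apply exp_increasing.
    assert (0 <= (s - sigma) * (INR n * (INR n - 1))) by (apply Rmult_le_pos; nra).
    nra. }
  pose proof (Rle_abs C). pose proof (exp_pos (sigma * INR n ^ 2)). unfold D in Hlt. nra.
Qed.

(** * Cosine series with summable amplitudes *)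

Section CosineSeries.

Variables (w a : nat -> R).

(* [cos_term m j] is the [m]-th derivative of [y |-> a j * cos (w j * y)]. *)
Definition cos_term (m j : nat) (y : R) : R :=
  a j * w j ^ m * cos (w j * y + INR m * (PI / 2)).

Definition cos_partial (m N : nat) (y : R) : R := sum_f_R0 (fun j => cos_term m j y) N.

Definition cos_series (m : nat) (y : R) : R := Series (fun j => cos_term m j y).

Hypothesis ex_series_amp : forall m, ex_series (fun j => Rabs (a j * w j ^ m)).

Lemma Rabs_cos_term_le m j y : Rabs (cos_term m j y) <= Rabs (a j * w j ^ m).
Proof.
  unfold cos_term. rewrite Rabs_mult.
  rewrite <- (Rmult_1_r (Rabs (a j * w j ^ m))) at 2.
  apply Rmult_le_compat_l; [apply Rabs_pos | apply Rabs_le, COS_bound].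
Qed.

Lemma ex_series_Rabs_cos_term m y : ex_series (fun j => Rabs (cos_term m j y)).
Proof.
  apply (@ex_series_le R_AbsRing R_CompleteNormedModule) with (2 := ex_series_amp m).
  intros j. unfold norm; simpl; unfold abs; simpl.
  rewrite Rabs_Rabsolu. apply Rabs_cos_term_le.
Qed.

Lemma cos_series_tail_le m N y :
  Rabs (cos_series m y - cos_partial m N y) <=
  Series (fun j => Rabs (a j * w j ^ m)) - sum_f_R0 (fun j => Rabs (a j * w j ^ m)) N.
Proof.
  pose proof (ex_series_Rabs_cos_term m y) as Hc.
  unfold cos_series, cos_partial.
  rewrite (Series_incr_n _ (S N)) by (lia || now apply ex_series_Rabs).
  rewrite (Series_incr_n _ (S N) (ltac:(lia)) (ex_series_amp m)). simpl Init.Nat.pred.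
  match goal with |- Rabs (?s + ?t - ?s) <= ?s' + ?t' - ?s' =>
    replace (s + t - s) with t by ring; replace (s' + t' - s') with t' by ring end.
  eapply Rle_trans.
  { apply Series_Rabs. now apply (ex_series_incr_n (fun j => Rabs (cos_term m j y)) (S N)). }
  apply Series_le; [| now apply (ex_series_incr_n (fun j => Rabs (a j * w j ^ m)) (S N))].
  intros n. split; [apply Rabs_pos | apply Rabs_cos_term_le].
Qed.

Lemma is_lim_seq_amp_tail m :
  is_lim_seq (fun N => Series (fun j => Rabs (a j * w j ^ m)) -
                       sum_f_R0 (fun j => Rabs (a j * w j ^ m)) N) 0.
Proof.
  set (S := Series _). replace 0 with (S - S) by ring.
  apply is_lim_seq_minus'; [apply is_lim_seq_const |].
  eapply is_lim_seq_ext; [| exact (Series_correct _ (ex_series_amp m))].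
  intros n. apply sum_n_Reals.
Qed.

Lemma Lim_seq_cos_partial m y : real (Lim_seq (fun N => cos_partial m N y)) = cos_series m y.
Proof.
  unfold cos_series, Series. f_equal. apply Lim_seq_ext.
  intros n. unfold cos_partial. now rewrite sum_n_Reals.
Qed.

Lemma CVU_cos_partial m : CVU_dom (cos_partial m) (fun _ => True).
Proof.
  intros eps.
  pose proof (is_lim_seq_amp_tail m) as H. apply is_lim_seq_Reals in H.
  destruct (H eps (cond_pos eps)) as [N0 HN0].
  exists N0. intros n Hn y _.
  rewrite Lim_seq_cos_partial, Rabs_minus_sym.
  eapply Rle_lt_trans; [apply cos_series_tail_le |].
  specialize (HN0 n Hn). unfold R_dist in HN0. rewrite Rminus_0_r in HN0.
  eapply Rle_lt_trans; [apply Rle_abs | exact HN0].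
Qed.

Lemma is_derive_cos_term m j y : is_derive (cos_term m j) y (cos_term (S m) j y).
Proof.
  unfold cos_term. auto_derive; [trivial |].
  rewrite S_INR, Rmult_plus_distr_r, Rmult_1_l, <- Rplus_assoc, cos_plus, cos_PI2, sin_PI2.
  simpl pow. ring.
Qed.

Lemma is_derive_cos_partial m N y : is_derive (cos_partial m N) y (cos_partial (S m) N y).
Proof.
  induction N as [| N IH]; unfold cos_partial; simpl.
  - apply is_derive_cos_term.
  - apply (is_derive_plus (cos_partial m N)); [apply IH | apply is_derive_cos_term].
Qed.

Lemma continuity_pt_cos_partial m N y : continuity_pt (cos_partial m N) y.
Proof.
  apply derivable_continuous_pt. exists (cos_partial (S m) N y).
  apply is_derive_Reals, is_derive_cos_partial.
Qed.

Lemma Derive_cos_partial m N y : Derive (cos_partial m N) y = cos_partial (S m) N y.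
Proof. apply is_derive_unique, is_derive_cos_partial. Qed.

Lemma is_derive_cos_series m y : is_derive (cos_series m) y (cos_series (S m) y).
Proof.
  apply (is_derive_ext (fun y => real (Lim_seq (fun N => cos_partial m N y))));
    [intros t; apply Lim_seq_cos_partial |].
  rewrite <- Lim_seq_cos_partial,
    <- (Lim_seq_ext (fun N => Derive (cos_partial m N) y)) by (intros N; apply Derive_cos_partial).
  apply (CVU_Derive (cos_partial m) (fun _ => True)); auto.
  - apply open_true.
  - intros x z _ _ t _. exact I.
  - apply CVU_cos_partial.
  - intros N x _. eexists. apply is_derive_cos_partial.
  - intros N x _. eapply continuity_pt_ext; [| apply (continuity_pt_cos_partial (S m) N x)].
    intros t. symmetry. apply Derive_cos_partial.
  - intros eps. destruct (CVU_cos_partial (S m) eps) as [N0 HN0]. exists N0.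
    intros n Hn x Hx. rewrite Derive_cos_partial.
    rewrite (Lim_seq_ext _ (fun k => cos_partial (S m) k x)) by (intros; apply Derive_cos_partial).
    now apply HN0.
Qed.

Lemma continuity_pt_cos_series m y : continuity_pt (cos_series m) y.
Proof.
  apply derivable_continuous_pt. exists (cos_series (S m) y).
  apply is_derive_Reals, is_derive_cos_series.
Qed.

Lemma is_lim_seq_RInt_cos_partial m b (c : R -> R) : 0 <= b ->
  (forall y, continuity_pt c y) -> (forall y, Rabs (c y) <= 1) ->
  is_lim_seq (fun N => RInt (fun y => cos_partial m N y * c y) 0 b)
             (RInt (fun y => cos_series m y * c y) 0 b).
Proof.
  intros Hb Hc Hc1.
  set (I := RInt (fun y => cos_series m y * c y) 0 b).
  set (T := fun N => Series (fun j => Rabs (a j * w j ^ m)) -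
                     sum_f_R0 (fun j => Rabs (a j * w j ^ m)) N).
  assert (Hex : forall f, (forall y, continuity_pt f y) -> ex_RInt (fun y => f y * c y) 0 b).
  { intros f Hf. apply ex_RInt_continuity. intros y. now apply continuity_pt_mult. }
  assert (Hdist : forall N, Rabs (I - RInt (fun y => cos_partial m N y * c y) 0 b) <= b * T N).
  { intros N. unfold I.
    rewrite <- (RInt_minus (V := R_CompleteNormedModule)) by
      (apply Hex; intros; first [apply continuity_pt_cos_series | apply continuity_pt_cos_partial]).
    replace (b * T N) with ((b - 0) * T N) by ring.
    apply abs_RInt_le_const; [lra | |].
    - apply ex_RInt_continuity. intros y. apply continuity_pt_minus;
        apply continuity_pt_mult; auto using continuity_pt_cos_series, continuity_pt_cos_partial.
    - intros t _. unfold minus, plus, opp; simpl.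
      replace (cos_series m t * c t + - (cos_partial m N t * c t))
        with ((cos_series m t - cos_partial m N t) * c t) by ring.
      rewrite Rabs_mult, <- (Rmult_1_r (T N)).
      apply Rmult_le_compat; auto using Rabs_pos, cos_series_tail_le. }
  assert (HT : is_lim_seq (fun N => b * T N) 0).
  { rewrite <- (Rmult_0_r b). apply (is_lim_seq_scal_l T b 0), is_lim_seq_amp_tail. }
  apply is_lim_seq_le_le with (fun N => I - b * T N) (fun N => I + b * T N).
  - intros N. specialize (Hdist N). apply Rabs_le_between in Hdist. lra.
  - replace (Finite I) with (Finite (I - 0)) by (f_equal; ring).
    apply is_lim_seq_minus'; [apply is_lim_seq_const | exact HT].
  - replace (Finite I) with (Finite (I + 0)) by (f_equal; ring).
    apply is_lim_seq_plus'; [apply is_lim_seq_const | exact HT].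
Qed.

End CosineSeries.

(** * Fourier modes on the torus *)

Lemma kappa0_pos L : 0 < L -> 0 < kappa0 L.
Proof. intros HL. unfold kappa0. pose proof PI_RGT_0. apply Rdiv_lt_0_compat; lra. Qed.

Lemma kappa0_mul_L L : 0 < L -> kappa0 L * L = 2 * PI.
Proof. intros HL. unfold kappa0. field. lra. Qed.

Lemma kappa0_IZR_mul_L L p : 0 < L -> kappa0 L * IZR p * L = 2 * (IZR p * PI).
Proof.
  intros HL. replace (2 * (IZR p * PI)) with (IZR p * (2 * PI)) by ring.
  rewrite <- (kappa0_mul_L L HL). ring.
Qed.

Lemma RInt_cos_mode L p : 0 < L ->
  RInt (fun y => cos (kappa0 L * IZR p * y)) 0 L = if Z.eq_dec p 0 then L else 0.
Proof.
  intros HL. pose proof (kappa0_pos L HL).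
  destruct (Z.eq_dec p 0) as [-> | Hp].
  { rewrite (RInt_ext _ (fun _ => 1)), RInt_const; [unfold scal; simpl; unfold mult; simpl; ring |].
    intros y _. now rewrite Rmult_0_r, Rmult_0_l, cos_0. }
  apply not_0_IZR in Hp. set (w := kappa0 L * IZR p).
  assert (Hw : w <> 0) by (unfold w; apply Rmult_integral_contrapositive; lra).
  apply is_RInt_unique.
  replace 0 with (minus (sin (w * L) / w) (sin (w * 0) / w)) at 2.
  - apply (is_RInt_derive (fun y => sin (w * y) / w)).
    + intros y _. auto_derive; [trivial | field; exact Hw].
    + intros y _. apply continuity_pt_filterlim. reg.
  - replace (w * L) with (2 * (IZR p * PI))
      by (unfold w; rewrite kappa0_IZR_mul_L by exact HL; reflexivity).
    rewrite sin_2a, sin_eq_0_1 by now exists p.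
    rewrite (Rmult_0_r w), sin_0. unfold minus, plus, opp; simpl. field. exact Hw.
Qed.

Lemma RInt_sin_mode L p : 0 < L ->
  RInt (fun y => sin (kappa0 L * IZR p * y)) 0 L = 0.
Proof.
  intros HL. pose proof (kappa0_pos L HL).
  destruct (Z.eq_dec p 0) as [-> | Hp].
  { rewrite (RInt_ext _ (fun _ => 0)), RInt_const; [unfold scal; simpl; unfold mult; simpl; ring |].
    intros y _. now rewrite Rmult_0_r, Rmult_0_l, sin_0. }
  apply not_0_IZR in Hp. set (w := kappa0 L * IZR p).
  assert (Hw : w <> 0) by (unfold w; apply Rmult_integral_contrapositive; lra).
  apply is_RInt_unique.
  replace 0 with (minus (- cos (w * L) / w) (- cos (w * 0) / w)) at 2.
  - apply (is_RInt_derive (fun y => - cos (w * y) / w)).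
    + intros y _. auto_derive; [trivial | field; exact Hw].
    + intros y _. apply continuity_pt_filterlim. reg.
  - replace (w * L) with (2 * (IZR p * PI))
      by (unfold w; rewrite kappa0_IZR_mul_L by exact HL; reflexivity).
    rewrite cos_2a_sin, sin_eq_0_1 by now exists p.
    rewrite (Rmult_0_r w), cos_0. unfold minus, plus, opp; simpl. field. exact Hw.
Qed.

Lemma int2_ext L (f g : R -> R -> R) :
  (forall x y, f x y = g x y) -> int2 L f = int2 L g.
Proof. intros H. unfold int2. apply RInt_ext. intros x _. apply RInt_ext. intros y _. apply H. Qed.

Lemma int2_zero L : int2 L (fun _ _ => 0) = 0.
Proof.
  unfold int2. rewrite (RInt_ext _ (fun _ => 0)).
  - rewrite RInt_const. apply Rmult_0_r.
  - intros x _. rewrite RInt_const. apply Rmult_0_r.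
Qed.

(** * The lacunary shear flow *)

Definition dyadic (j : nat) : Z := Z.of_nat (2 ^ j).

Definition dyadic_freq (L : R) (j : nat) : R := kappa0 L * 2 ^ j.

Definition gauss_amp (r : R) (j : nat) : R := exp (- (r * INR j ^ 2) / 2).

Definition lacunary (L r : R) : nat -> R -> R := cos_series (dyadic_freq L) (gauss_amp r).

Definition lacunary_field (L r : R) : vfield := fun _ y => (lacunary L r 0 y, 0).

Lemma IZR_dyadic j : IZR (dyadic j) = 2 ^ j.
Proof. unfold dyadic. now rewrite <- INR_IZR_INZ, pow_INR. Qed.

Lemma dyadic_pos j : (0 < dyadic j)%Z.
Proof. apply lt_IZR. rewrite IZR_dyadic. apply pow_lt. lra. Qed.

Lemma dyadic_gt j : (Z.of_nat j < dyadic j)%Z.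
Proof.
  unfold dyadic. apply Nat2Z.inj_lt.
  induction j as [| j IH]; simpl; lia.
Qed.

Lemma dyadic_inj j j' : dyadic j = dyadic j' -> j = j'.
Proof. unfold dyadic. intros H. apply Nat2Z.inj, Nat.pow_inj_r in H; lia. Qed.

Section Lacunary.

Variables (L r : R).
Hypotheses (HL : 0 < L) (Hr : 0 < r).

Lemma ex_series_lacunary_amp m :
  ex_series (fun j => Rabs (gauss_amp r j * dyadic_freq L j ^ m)).
Proof.
  pose proof (kappa0_pos L HL).
  assert (Hpos : forall j, 0 < gauss_amp r j * dyadic_freq L j ^ m).
  { intros j. apply Rmult_lt_0_compat; [apply exp_pos |].
    apply pow_lt, Rmult_lt_0_compat; [lra | apply pow_lt; lra]. }
  apply ex_series_DAlembert with 0; [lra | intros j; specialize (Hpos j); lra |].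
  apply is_lim_seq_ext with (fun n => 2 ^ m * exp (- r / 2) * exp (- r) ^ n).
  { intros n. rewrite Rabs_pos_eq by (apply Rlt_le, Rdiv_lt_0_compat; apply Hpos).
    assert (Ha : gauss_amp r (S n) = gauss_amp r n * (exp (- r / 2) * exp (- r) ^ n)).
    { unfold gauss_amp. rewrite exp_pow, <- !exp_plus, S_INR. f_equal. field. }
    assert (Hf : dyadic_freq L (S n) ^ m = 2 ^ m * dyadic_freq L n ^ m).
    { unfold dyadic_freq. rewrite <- Rpow_mult_distr. f_equal. simpl. ring. }
    assert (0 < gauss_amp r n) by apply exp_pos.
    assert (0 < dyadic_freq L n ^ m)
      by (apply pow_lt, Rmult_lt_0_compat; [lra | apply pow_lt; lra]).
    rewrite Ha, Hf. field. lra. }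
  replace (Finite 0) with (Rbar_mult (2 ^ m * exp (- r / 2)) 0) by (simpl; f_equal; ring).
  apply is_lim_seq_scal_l, is_lim_seq_geom.
  rewrite Rabs_pos_eq by (apply Rlt_le, exp_pos).
  rewrite <- exp_0. apply exp_increasing. lra.
Qed.

Lemma is_derive_lacunary m y : is_derive (lacunary L r m) y (lacunary L r (S m) y).
Proof. apply is_derive_cos_series, ex_series_lacunary_amp. Qed.

Lemma continuity_pt_lacunary m y : continuity_pt (lacunary L r m) y.
Proof. apply continuity_pt_cos_series, ex_series_lacunary_amp. Qed.

(* Every iterated partial derivative of a component of [lacunary_field L r] has this form. *)
Definition lacunary_profile (phi : R -> R -> R) : Prop :=
  (exists m, forall x y, phi x y = lacunary L r m y) \/ (forall x y, phi x y = 0).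

Lemma lacunary_profile_partial d phi :
  lacunary_profile phi -> lacunary_profile (partial d phi).
Proof.
  intros [[m Hm] | H0]; unfold partial; destruct d.
  - left. exists (S m). intros x y.
    rewrite (Derive_ext _ (lacunary L r m)) by auto.
    apply is_derive_unique, is_derive_lacunary.
  - right. intros x y. rewrite (Derive_ext _ (fun _ => lacunary L r m y)) by auto.
    apply Derive_const.
  - right. intros x y. rewrite (Derive_ext _ (fun _ => 0)) by auto. apply Derive_const.
  - right. intros x y. rewrite (Derive_ext _ (fun _ => 0)) by auto. apply Derive_const.
Qed.

Lemma smooth2_of_lacunary_profile phi : lacunary_profile phi -> smooth2 phi.
Proof.
  intros Hphi ds.
  assert (Hds : lacunary_profile (iterD ds phi)).
  { induction ds as [| d ds IH]; simpl; auto using lacunary_profile_partial. }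
  destruct Hds as [[m Hm] | H0]; split.
  - intros x y. apply (continuous_ext (fun p : R * R => lacunary L r m (snd p))).
    { intros p. now rewrite Hm. }
    apply (continuous_comp snd (lacunary L r m)); [apply continuous_snd |].
    apply continuity_pt_filterlim, continuity_pt_lacunary.
  - intros [] x y.
    + apply (ex_derive_ext (lacunary L r m)); [intros t; now rewrite Hm |].
      eexists. apply is_derive_lacunary.
    + apply (ex_derive_ext (fun _ => lacunary L r m y)); [intros t; now rewrite Hm |].
      apply ex_derive_const.
  - intros x y. apply (continuous_ext (fun _ => 0)); [intros p; now rewrite H0 |].
    apply continuous_const.
  - intros [] x y; apply (ex_derive_ext (fun _ => 0));
      solve [intros t; now rewrite H0 | apply ex_derive_const].
Qed.

Lemma lacunary_periodic m y : lacunary L r m (y + L) = lacunary L r m y.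
Proof.
  unfold lacunary, cos_series. apply Series_ext. intros j. unfold cos_term, dyadic_freq.
  replace (kappa0 L * 2 ^ j * (y + L) + INR m * (PI / 2)) with
    (kappa0 L * 2 ^ j * y + INR m * (PI / 2) + 2 ^ j * (kappa0 L * L)) by ring.
  rewrite (kappa0_mul_L L HL).
  replace (2 ^ j * (2 * PI)) with (2 * INR (2 ^ j) * PI)
    by (rewrite pow_INR, INR_IZR_INZ; simpl; ring).
  now rewrite cos_period.
Qed.

End Lacunary.

Definition dyadic_match (j : nat) (k : Z) : R :=
  (if Z.eq_dec (dyadic j) k then 1 else 0) + (if Z.eq_dec (dyadic j) (- k) then 1 else 0).

(* Only [j <= |k|] can contribute, since [2^j > j]. *)
Definition lacunary_coef (r : R) (k : Z) : R :=
  sum_f_R0 (fun j => gauss_amp r j * dyadic_match j k) (Z.to_nat (Z.abs k)).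

Lemma dyadic_match_large j k : (Z.to_nat (Z.abs k) < j)%nat -> dyadic_match j k = 0.
Proof.
  intros H. pose proof (dyadic_gt j). unfold dyadic_match.
  destruct (Z.eq_dec _ k), (Z.eq_dec _ (- k)); lia || ring.
Qed.

Lemma lacunary_coef_0 r : lacunary_coef r 0 = 0.
Proof. unfold lacunary_coef, dyadic_match. simpl. ring. Qed.

Lemma lacunary_coef_dyadic r k j : Z.abs k = dyadic j -> lacunary_coef r k = gauss_amp r j.
Proof.
  intros Hk. pose proof (dyadic_gt j). unfold lacunary_coef.
  rewrite (sum_f_R0_single _ j) by
    (lia || (intros i Hi; pose proof (dyadic_pos i); unfold dyadic_match;
             destruct (Z.eq_dec (dyadic i) k), (Z.eq_dec (dyadic i) (- k));
             try ring; exfalso; apply Hi, dyadic_inj; lia)).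
  unfold dyadic_match. destruct (Z.eq_dec (dyadic j) k), (Z.eq_dec (dyadic j) (- k)); try lia; ring.
Qed.

Lemma lacunary_coef_non_dyadic r k : (forall j, Z.abs k <> dyadic j) -> lacunary_coef r k = 0.
Proof.
  intros Hk. unfold lacunary_coef. apply sum_eq_R0. intros j _. unfold dyadic_match.
  specialize (Hk j). pose proof (dyadic_pos j).
  destruct (Z.eq_dec (dyadic j) k), (Z.eq_dec (dyadic j) (- k)); lia || ring.
Qed.

Section LacunaryFourier.

Variables (L r : R).
Hypotheses (HL : 0 < L) (Hr : 0 < r).

Let F := lacunary L r 0.

Lemma ex_RInt_lacunary_mul (c : R -> R) :
  (forall y, continuity_pt c y) -> ex_RInt (fun y => F y * c y) 0 L.
Proof.
  intros Hc. apply ex_RInt_continuity. intros y.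
  apply continuity_pt_mult; [apply continuity_pt_lacunary | apply Hc]; assumption.
Qed.

Lemma cos_term_dyadic j y :
  cos_term (dyadic_freq L) (gauss_amp r) 0 j y =
  gauss_amp r j * cos (kappa0 L * IZR (dyadic j) * y).
Proof.
  unfold cos_term, dyadic_freq. rewrite IZR_dyadic. simpl. f_equal; [ring | f_equal; ring].
Qed.

Lemma RInt_cos_term_cos j k :
  RInt (fun y => cos_term (dyadic_freq L) (gauss_amp r) 0 j y * cos (kappa0 L * IZR k * y)) 0 L =
  L / 2 * (gauss_amp r j * dyadic_match j k).
Proof.
  rewrite (RInt_ext _ (fun y => gauss_amp r j / 2 * cos (kappa0 L * IZR (dyadic j - k) * y) +
                                gauss_amp r j / 2 * cos (kappa0 L * IZR (dyadic j + k) * y))).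
  2:{ intros y _. real_equation. rewrite cos_term_dyadic, minus_IZR, plus_IZR.
      set (A := kappa0 L * IZR (dyadic j) * y). set (B := kappa0 L * IZR k * y).
      replace (kappa0 L * (IZR (dyadic j) - IZR k) * y) with (A - B) by (unfold A, B; ring).
      replace (kappa0 L * (IZR (dyadic j) + IZR k) * y) with (A + B) by (unfold A, B; ring).
      rewrite cos_minus, cos_plus. field. }
  rewrite RInt_lin_comb, !RInt_cos_mode by (exact HL || (apply ex_RInt_continuity; intros; reg)).
  unfold dyadic_match. real_equation.
  destruct (Z.eq_dec (dyadic j - k) 0), (Z.eq_dec (dyadic j) k),
    (Z.eq_dec (dyadic j + k) 0), (Z.eq_dec (dyadic j) (- k)); lia || field.
Qed.

Lemma RInt_cos_term_sin j k :
  RInt (fun y => cos_term (dyadic_freq L) (gauss_amp r) 0 j y * sin (kappa0 L * IZR k * y)) 0 L = 0.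
Proof.
  rewrite (RInt_ext _ (fun y => gauss_amp r j / 2 * sin (kappa0 L * IZR (dyadic j + k) * y) +
                                - (gauss_amp r j / 2) * sin (kappa0 L * IZR (dyadic j - k) * y))).
  2:{ intros y _. real_equation. rewrite cos_term_dyadic, minus_IZR, plus_IZR.
      set (A := kappa0 L * IZR (dyadic j) * y). set (B := kappa0 L * IZR k * y).
      replace (kappa0 L * (IZR (dyadic j) - IZR k) * y) with (A - B) by (unfold A, B; ring).
      replace (kappa0 L * (IZR (dyadic j) + IZR k) * y) with (A + B) by (unfold A, B; ring).
      rewrite sin_minus, sin_plus. field. }
  rewrite RInt_lin_comb, !RInt_sin_mode by (exact HL || (apply ex_RInt_continuity; intros; reg)).
  real_equation. ring.
Qed.

Lemma RInt_cos_partial_mul (c : R -> R) N :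
  (forall y, continuity_pt c y) ->
  RInt (fun y => cos_partial (dyadic_freq L) (gauss_amp r) 0 N y * c y) 0 L =
  sum_f_R0 (fun j => RInt (fun y => cos_term (dyadic_freq L) (gauss_amp r) 0 j y * c y) 0 L) N.
Proof.
  intros Hc. rewrite <- RInt_sum_f_R0.
  - apply RInt_ext. intros y _. unfold cos_partial. now rewrite Rmult_comm, scal_sum.
  - intros j y. apply continuity_pt_mult; [| apply Hc].
    apply derivable_continuous_pt. eexists. apply is_derive_Reals, is_derive_cos_term.
Qed.

Lemma RInt_lacunary_cos k :
  RInt (fun y => F y * cos (kappa0 L * IZR k * y)) 0 L = L / 2 * lacunary_coef r k.
Proof.
  apply (is_lim_seq_eventually_const
    (fun N => RInt (fun y => cos_partial (dyadic_freq L) (gauss_amp r) 0 N y *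
                             cos (kappa0 L * IZR k * y)) 0 L) _ _ (Z.to_nat (Z.abs k))).
  - intros N HN. rewrite RInt_cos_partial_mul by (intros; reg).
    rewrite (sum_eq _ (fun j => gauss_amp r j * dyadic_match j k * (L / 2)))
      by (intros j _; rewrite RInt_cos_term_cos; ring).
    rewrite <- scal_sum. f_equal. apply sum_f_R0_vanishing_tail; [exact HN |].
    intros j Hj. rewrite dyadic_match_large by exact Hj. ring.
  - apply is_lim_seq_RInt_cos_partial; [apply ex_series_lacunary_amp; auto | lra | |].
    + intros y. reg.
    + intros y. apply Rabs_le, COS_bound.
Qed.

Lemma RInt_lacunary_sin k : RInt (fun y => F y * sin (kappa0 L * IZR k * y)) 0 L = 0.
Proof.
  apply (is_lim_seq_eventually_const
    (fun N => RInt (fun y => cos_partial (dyadic_freq L) (gauss_amp r) 0 N y *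
                             sin (kappa0 L * IZR k * y)) 0 L) _ _ 0).
  - intros N _. rewrite RInt_cos_partial_mul by (intros; reg).
    rewrite (sum_eq _ (fun _ => 0)) by (intros j _; apply RInt_cos_term_sin).
    rewrite sum_cte. ring.
  - apply is_lim_seq_RInt_cos_partial; [apply ex_series_lacunary_amp; auto | lra | |].
    + intros y. reg.
    + intros y. apply Rabs_le, SIN_bound.
Qed.

Lemma int2_lacunary_cos k1 k2 :
  int2 L (fun x y => Defs.comp false (lacunary_field L r) x y * cos (phase L k1 k2 x y)) =
  L / 2 * lacunary_coef r k2 * (if Z.eq_dec k1 0 then L else 0).
Proof.
  unfold int2.
  rewrite (RInt_ext _ (fun x => L / 2 * lacunary_coef r k2 * cos (kappa0 L * IZR k1 * x))).
  { rewrite (RInt_scal (V := R_CompleteNormedModule) (fun x => cos (kappa0 L * IZR k1 * x)))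
      by (apply ex_RInt_continuity; intros; reg).
    now rewrite RInt_cos_mode. }
  intros x _. real_equation.
  rewrite (RInt_ext _ (fun y => cos (kappa0 L * IZR k1 * x) * (F y * cos (kappa0 L * IZR k2 * y)) +
                            - sin (kappa0 L * IZR k1 * x) * (F y * sin (kappa0 L * IZR k2 * y)))).
  - rewrite RInt_lin_comb, RInt_lacunary_cos, RInt_lacunary_sin
      by (apply ex_RInt_lacunary_mul; intros; reg).
    unfold scal; simpl; unfold mult; simpl. ring.
  - intros y _. unfold Defs.comp, lacunary_field, phase; simpl.
    rewrite Rmult_plus_distr_l, <- !Rmult_assoc, cos_plus. fold F. ring.
Qed.

Lemma int2_lacunary_sin k1 k2 :
  int2 L (fun x y => Defs.comp false (lacunary_field L r) x y * sin (phase L k1 k2 x y)) = 0.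
Proof.
  unfold int2.
  rewrite (RInt_ext _ (fun x => L / 2 * lacunary_coef r k2 * sin (kappa0 L * IZR k1 * x))).
  { rewrite (RInt_scal (V := R_CompleteNormedModule) (fun x => sin (kappa0 L * IZR k1 * x)))
      by (apply ex_RInt_continuity; intros; reg).
    rewrite RInt_sin_mode by exact HL. apply Rmult_0_r. }
  intros x _. real_equation.
  rewrite (RInt_ext _ (fun y => sin (kappa0 L * IZR k1 * x) * (F y * cos (kappa0 L * IZR k2 * y)) +
                            cos (kappa0 L * IZR k1 * x) * (F y * sin (kappa0 L * IZR k2 * y)))).
  - rewrite RInt_lin_comb, RInt_lacunary_cos, RInt_lacunary_sin
      by (apply ex_RInt_lacunary_mul; intros; reg).
    ring.
  - intros y _. unfold Defs.comp, lacunary_field, phase; simpl.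
    rewrite Rmult_plus_distr_l, <- !Rmult_assoc, sin_plus. fold F. ring.
Qed.

Lemma int2_lacunary_second (h : R -> R -> R) :
  int2 L (fun x y => Defs.comp true (lacunary_field L r) x y * h x y) = 0.
Proof.
  rewrite <- (int2_zero L). apply int2_ext. intros x y. apply Rmult_0_l.
Qed.

Lemma four_sq_lacunary_field k1 k2 :
  four_sq L (lacunary_field L r) k1 k2 =
  if Z.eq_dec k1 0 then (L / 2 * lacunary_coef r k2) ^ 2 else 0.
Proof.
  unfold four_sq. rewrite int2_lacunary_cos, int2_lacunary_sin, !int2_lacunary_second.
  destruct (Z.eq_dec k1 0); field; lra.
Qed.

Lemma lacunary_field_smooth_in_H : smooth_in_H L (lacunary_field L r).
Proof.
  split.
  - intros [|]; split; [| split | | split].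
    + apply (smooth2_of_lacunary_profile L r HL Hr). right. reflexivity.
    + intros x y. split; reflexivity.
    + apply int2_zero.
    + apply (smooth2_of_lacunary_profile L r HL Hr). left. exists 0%nat. reflexivity.
    + intros x y. split; [reflexivity | apply (lacunary_periodic L r HL)].
    + rewrite (int2_ext _ _ (fun x y => Defs.comp false (lacunary_field L r) x y *
                                        cos (phase L 0 0 x y))).
      * rewrite int2_lacunary_cos, lacunary_coef_0. ring.
      * intros x y. unfold phase. rewrite !Rmult_0_l, Rplus_0_r, Rmult_0_r, cos_0. ring.
  - intros x y. unfold partial, Defs.comp, lacunary_field; simpl.
    rewrite !Derive_const. ring.
Qed.

End LacunaryFourier.

(** * Spectral energy of the lacunary flow *)

Definition mode_energy (L : R) (u : vfield) (alpha : nat) (k1 k2 : Z) : R :=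
  eig L k1 k2 ^ alpha * four_sq L u k1 k2.

Definition dyadic_weight (r : R) (alpha j : nat) : R := (2 ^ j) ^ (2 * alpha) * gauss_amp r j ^ 2.

Section LacunarySpectrum.

Variables (L r : R) (alpha : nat).
Hypotheses (HL : 0 < L) (Hr : 0 < r).

Lemma mode_energy_lacunary_nonneg k1 k2 : 0 <= mode_energy L (lacunary_field L r) alpha k1 k2.
Proof.
  unfold mode_energy. apply Rmult_le_pos.
  - apply pow_le. unfold eig. apply Rmult_le_pos; [apply pow2_ge_0 |].
    pose proof (pow2_ge_0 (IZR k1)). pose proof (pow2_ge_0 (IZR k2)). lra.
  - rewrite four_sq_lacunary_field by assumption.
    destruct (Z.eq_dec k1 0); [apply pow2_ge_0 | lra].
Qed.

Lemma mode_energy_lacunary_dyadic k j : Z.abs k = dyadic j ->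
  mode_energy L (lacunary_field L r) alpha 0 k =
  kappa0 L ^ (2 * alpha) * (L ^ 2 / 4) * dyadic_weight r alpha j.
Proof.
  intros Hk. unfold mode_energy, dyadic_weight.
  assert (He : eig L 0 k ^ alpha = kappa0 L ^ (2 * alpha) * (2 ^ j) ^ (2 * alpha)).
  { assert (Hsq : IZR k ^ 2 = (2 ^ j) ^ 2)
      by (rewrite <- IZR_dyadic, <- Hk, abs_IZR; symmetry; apply pow2_abs).
    unfold eig. rewrite Hsq, !pow_mult, <- Rpow_mult_distr. f_equal. ring. }
  rewrite He, four_sq_lacunary_field, (lacunary_coef_dyadic r k j Hk) by assumption.
  destruct (Z.eq_dec 0 0); [field | lia].
Qed.

Lemma mode_energy_lacunary_non_dyadic k : (forall j, Z.abs k <> dyadic j) ->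
  mode_energy L (lacunary_field L r) alpha 0 k = 0.
Proof.
  intros Hk. unfold mode_energy.
  rewrite four_sq_lacunary_field, lacunary_coef_non_dyadic by assumption.
  destruct (Z.eq_dec 0 0); [ring | lia].
Qed.

Lemma normA_partial_lacunary N :
  normA_partial L (lacunary_field L r) alpha N =
  sum_f_R0 (fun l => mode_energy L (lacunary_field L r) alpha 0 (Z.of_nat l - Z.of_nat N)) (2 * N).
Proof.
  unfold normA_partial. rewrite (sum_f_R0_single _ N) by
    (lia || (intros i Hi; apply sum_eq_R0; intros l _; cbv zeta;
             rewrite four_sq_lacunary_field by assumption;
             destruct (Z.eq_dec _ 0); [lia | ring])).
  apply sum_eq. intros l _. now rewrite Z.sub_diag.
Qed.

Lemma mode_energy_le_normA2 j :
  Rbar_le (mode_energy L (lacunary_field L r) alpha 0 (dyadic j))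
          (normA2 L (lacunary_field L r) alpha).
Proof.
  unfold normA2. rewrite <- Lim_seq_const. apply Lim_seq_le_loc.
  exists (2 ^ j)%nat. intros N HN. rewrite normA_partial_lacunary.
  unfold dyadic in *. set (p := (2 ^ j)%nat) in *.
  replace (Z.of_nat p) with (Z.of_nat (N + p) - Z.of_nat N)%Z by lia.
  apply (sum_f_R0_ge_term (fun l => mode_energy L (lacunary_field L r) alpha 0
                                      (Z.of_nat l - Z.of_nat N))); [lia |].
  intros. apply mode_energy_lacunary_nonneg.
Qed.

End LacunarySpectrum.

Definition rate (s : R) : R := ln 2 ^ 2 / s.

Lemma rate_pos s : 0 < s -> 0 < rate s.
Proof. intros Hs. unfold rate. apply Rdiv_lt_0_compat; [apply pow_lt, ln2_pos | exact Hs]. Qed.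

Lemma dyadic_weight_exp r alpha j :
  dyadic_weight r alpha j = exp (2 * INR alpha * INR j * ln 2 - r * INR j ^ 2).
Proof.
  unfold dyadic_weight, gauss_amp.
  rewrite <- (exp_ln 2) at 1 by lra.
  rewrite !exp_pow, <- exp_plus, mult_INR. f_equal. simpl. field.
Qed.

Lemma dyadic_weight_le s sigma alpha j : 0 < s -> s < sigma ->
  dyadic_weight (rate s) alpha j * (2 ^ j * (2 ^ j + 1)) <=
  2 * exp (s + s ^ 2 / (sigma - s) + sigma * INR alpha ^ 2).
Proof.
  intros Hs Hsig.
  assert (Hx : 1 <= 2 ^ j) by (apply pow_R1_Rle; lra).
  assert (H4 : 2 ^ j * (2 ^ j + 1) <= 2 * exp (2 * INR j * ln 2)).
  { replace (exp (2 * INR j * ln 2)) with (2 ^ j * 2 ^ j).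
    - nra.
    - rewrite <- pow_add, <- (exp_ln 2) at 1 by lra. rewrite exp_pow, plus_INR. f_equal. ring. }
  eapply Rle_trans.
  { apply Rmult_le_compat_l; [rewrite dyadic_weight_exp; apply Rlt_le, exp_pos | exact H4]. }
  rewrite dyadic_weight_exp, Rmult_comm, Rmult_assoc, <- exp_plus.
  apply Rmult_le_compat_l; [lra |]. apply exp_le_compat.
  pose proof (quadratic_exponent_le (INR alpha) (INR j) (ln 2) s sigma Hs Hsig).
  unfold rate. lra.
Qed.

Lemma dyadic_weight_ge s alpha : 0 < s ->
  exp (s * INR alpha ^ 2 - rate s) <=
  dyadic_weight (rate s) alpha (Z.to_nat (Int_part (INR alpha * (s / ln 2)))).
Proof.
  intros Hs. pose proof ln2_pos as Hl.
  set (t := INR alpha * (s / ln 2)).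
  assert (Ht : 0 <= t)
    by (apply Rmult_le_pos; [apply pos_INR | apply Rlt_le, Rdiv_lt_0_compat; lra]).
  destruct (base_Int_part t) as [F1 F2].
  assert (Hj : INR (Z.to_nat (Int_part t)) = IZR (Int_part t)).
  { rewrite INR_IZR_INZ, Z2Nat.id; [reflexivity |].
    assert (Hneg : IZR (-1) < IZR (Int_part t)) by (simpl; lra).
    apply lt_IZR in Hneg. lia. }
  rewrite dyadic_weight_exp, Hj. apply exp_le_compat.
  (* the exponent is a concave quadratic in [j], maximal at [j = t], and [|j - t| <= 1] *)
  set (J := IZR (Int_part t)) in *.
  assert (Hsq : (t - J) ^ 2 <= 1) by nra.
  replace (2 * INR alpha * J * ln 2 - rate s * J ^ 2) with
    (s * INR alpha ^ 2 - rate s * (t - J) ^ 2) by (unfold t, rate; field; lra).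
  assert (0 < rate s) by now apply rate_pos.
  nra.
Qed.

Definition lacunary_const (s sigma : R) : R := s + s ^ 2 / (sigma - s).

Lemma mode_energy_lacunary_le L s sigma alpha k : 0 < L -> 0 < s -> s < sigma -> k <> 0%Z ->
  mode_energy L (lacunary_field L (rate s)) alpha 0 k <=
  kappa0 L ^ (2 * alpha) * (L ^ 2 / 2) * exp (lacunary_const s sigma + sigma * INR alpha ^ 2) *
  (1 / IZR (Z.abs k) - 1 / (IZR (Z.abs k) + 1)).
Proof.
  intros HL Hs Hsig Hk.
  pose proof (rate_pos s Hs) as Hr.
  assert (HP : 0 <= kappa0 L ^ (2 * alpha) * (L ^ 2 / 4))
    by (pose proof (kappa0_pos L HL); apply Rmult_le_pos; [apply pow_le | apply Rmult_le_pos]; nra).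
  set (E := exp (lacunary_const s sigma + sigma * INR alpha ^ 2)).
  assert (HE : 0 < E) by apply exp_pos.
  destruct (classic (exists j, Z.abs k = dyadic j)) as [[j Hj] | Hnd].
  - rewrite (mode_energy_lacunary_dyadic L (rate s) alpha HL Hr k j Hj), Hj, IZR_dyadic.
    assert (Hx : 1 <= 2 ^ j) by (apply pow_R1_Rle; lra).
    replace (1 / 2 ^ j - 1 / (2 ^ j + 1)) with (/ (2 ^ j * (2 ^ j + 1))) by (field; lra).
    replace (kappa0 L ^ (2 * alpha) * (L ^ 2 / 2) * E * / (2 ^ j * (2 ^ j + 1))) with
      (kappa0 L ^ (2 * alpha) * (L ^ 2 / 4) * (2 * E / (2 ^ j * (2 ^ j + 1)))) by (field; lra).
    apply Rmult_le_compat_l; [exact HP |].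
    apply (Rmult_le_reg_r (2 ^ j * (2 ^ j + 1))); [nra |].
    unfold Rdiv. rewrite Rmult_assoc, Rinv_l by nra. rewrite Rmult_1_r.
    now apply dyadic_weight_le.
  - rewrite mode_energy_lacunary_non_dyadic by (auto; intros j Hj; apply Hnd; now exists j).
    assert (Hk1 : 1 <= IZR (Z.abs k)) by (apply IZR_le; lia).
    assert (1 / (IZR (Z.abs k) + 1) <= 1 / IZR (Z.abs k))
      by (apply Rmult_le_compat_l; [lra | apply Rinv_le_contravar; lra]).
    apply Rmult_le_pos; [apply Rmult_le_pos; [nra | lra] | lra].
Qed.

Lemma normA_partial_lacunary_le L s sigma alpha N : 0 < L -> 0 < s -> s < sigma ->
  normA_partial L (lacunary_field L (rate s)) alpha N <=
  kappa0 L ^ (2 * alpha) * L ^ 2 * exp (lacunary_const s sigma + sigma * INR alpha ^ 2).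
Proof.
  intros HL Hs Hsig. pose proof (rate_pos s Hs) as Hr.
  rewrite normA_partial_lacunary by assumption.
  set (B := kappa0 L ^ (2 * alpha) * (L ^ 2 / 2) *
            exp (lacunary_const s sigma + sigma * INR alpha ^ 2)).
  replace (kappa0 L ^ (2 * alpha) * L ^ 2 * exp (lacunary_const s sigma + sigma * INR alpha ^ 2))
    with (2 * B) by (unfold B; field).
  apply sum_f_R0_symmetric_telescope_le.
  - pose proof (kappa0_pos L HL). unfold B.
    apply Rmult_le_pos; [apply Rmult_le_pos; [apply pow_le | nra] | apply Rlt_le, exp_pos]; lra.
  - rewrite mode_energy_lacunary_non_dyadic by (auto; intros j Hj; pose proof (dyadic_pos j); lia).
    lra.
  - intros k Hk. now apply mode_energy_lacunary_le.
Qed.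

Lemma classC_mono L nu sigma1 sigma2 u : sigma1 <= sigma2 ->
  classC L nu sigma1 u -> classC L nu sigma2 u.
Proof.
  intros H12 [Hu [c0 Hc]]. split; [exact Hu |]. exists (Rmax c0 0). intros alpha.
  eapply Rbar_le_trans; [apply Hc |]. cbn [Rbar_le].
  set (K := nu ^ 2 * kappa0 L ^ (2 * alpha)).
  assert (HK : 0 <= K)
    by (unfold K; rewrite pow_mult; apply Rmult_le_pos; [| apply pow_le]; apply pow2_ge_0).
  assert (He : exp (sigma1 * INR alpha ^ 2) <= exp (sigma2 * INR alpha ^ 2))
    by (apply exp_le_compat; pose proof (pow2_ge_0 (INR alpha)); nra).
  pose proof (exp_pos (sigma1 * INR alpha ^ 2)).
  apply Rmult_le_compat_r; [exact HK |].
  destruct (Rle_lt_dec 0 c0).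
  - rewrite Rmax_left by lra. now apply Rmult_le_compat_l.
  - rewrite Rmax_right by lra. rewrite Rmult_0_l. nra.
Qed.

Lemma lacunary_in_classC L nu s sigma : 0 < L -> 0 < nu -> 0 < s -> s < sigma ->
  classC L nu sigma (lacunary_field L (rate s)).
Proof.
  intros HL Hnu Hs Hsig. split.
  - apply lacunary_field_smooth_in_H; [exact HL | now apply rate_pos].
  - exists (L ^ 2 * exp (lacunary_const s sigma) / nu ^ 2). intros alpha.
    unfold normA2. rewrite <- Lim_seq_const. apply Lim_seq_le_loc.
    exists 0%nat. intros N _.
    eapply Rle_trans; [now apply (normA_partial_lacunary_le L s sigma) |].
    rewrite exp_plus. right. field. lra.
Qed.

Lemma lacunary_notin_classC L nu s sigma : 0 < L -> 0 < s -> sigma < s ->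
  ~ classC L nu sigma (lacunary_field L (rate s)).
Proof.
  intros HL Hs Hsig [_ [c0 Hc]].
  pose proof (rate_pos s Hs) as Hr.
  assert (HA : 0 < L ^ 2 / 4 * exp (- rate s))
    by (apply Rmult_lt_0_compat; [nra | apply exp_pos]).
  destruct (exp_quadratic_dominates sigma s (c0 * nu ^ 2) _ Hsig HA) as [alpha Halpha].
  set (j := Z.to_nat (Int_part (INR alpha * (s / ln 2)))).
  pose proof (Rbar_le_trans _ _ _ (mode_energy_le_normA2 L (rate s) alpha HL Hr j) (Hc alpha))
    as Hle; cbn [Rbar_le] in Hle.
  rewrite (mode_energy_lacunary_dyadic L (rate s) alpha HL Hr (dyadic j) j)
    in Hle by (pose proof (dyadic_pos j); lia).
  pose proof (dyadic_weight_ge s alpha Hs) as Hw. fold j in Hw.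
  rewrite Rminus_def, exp_plus in Hw.
  set (P := kappa0 L ^ (2 * alpha)) in Hle.
  assert (HP : 0 < P) by (apply pow_lt, kappa0_pos, HL).
  assert (Hcmp : L ^ 2 / 4 * exp (- rate s) * exp (s * INR alpha ^ 2) <=
                 c0 * nu ^ 2 * exp (sigma * INR alpha ^ 2)).
  { apply (Rmult_le_reg_l P); [exact HP |].
    replace (P * (c0 * nu ^ 2 * exp (sigma * INR alpha ^ 2)))
      with (c0 * exp (sigma * INR alpha ^ 2) * (nu ^ 2 * P)) by ring.
    eapply Rle_trans; [| exact Hle].
    replace (P * (L ^ 2 / 4 * exp (- rate s) * exp (s * INR alpha ^ 2)))
      with (P * (L ^ 2 / 4) * (exp (s * INR alpha ^ 2) * exp (- rate s))) by ring.
    apply Rmult_le_compat_l; [nra | exact Hw]. }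
  lra.
Qed.

Theorem proposition10p3 (L nu sigma1 sigma2 : R) :
  0 < L -> 0 < nu -> 0 < sigma1 -> sigma1 < sigma2 ->
  (forall u : vfield, classC L nu sigma1 u -> classC L nu sigma2 u) /\
  (exists u : vfield, classC L nu sigma2 u /\ ~ classC L nu sigma1 u).
Proof.
  intros HL Hnu Hs1 H12. split.
  - intros u. apply classC_mono. lra.
  - set (s := (sigma1 + sigma2) / 2).
    exists (lacunary_field L (rate s)). split.
    + apply lacunary_in_classC; unfold s; lra.
    + apply lacunary_notin_classC; unfold s; lra.
Qed.
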